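(* Let $W$ be a finite Weyl group with root system $R\subset V$, let $U\subseteq V$ be a subspace with orthogonal complement $U^\perp$, let $w\in W$, and let $X=\bigcap_{\alpha\in I(w)\cap R_U}\ker\alpha$ (so $U^\perp\subseteq X$). Then the inversion arrangement $\mathcal{I}(\mathrm{fl}_U(w))$ (an arrangement in $U$) is equal to the quotient $\mathcal{I}(w)_X/U^\perp$ of the localization $\mathcal{I}(w)_X$, under the identification $V/U^\perp\cong U$.
   Context: $R^+$, $R^-$ are the positive and negative roots; $I(w)=\{\alpha\in R^+:w^{-1}\alpha\in R^-\}$; $\mathcal{I}(w)$ is the arrangement of hyperplanes $\ker\alpha$, $\alpha\in I(w)$. $R_U=R\cap U$ is a root system in $U$ with positive roots $R^+\cap U$ and Weyl group $W_U$; $\mathrm{fl}_U(w)$ is the unique element of $W_U$ whose inversion set in $R_U$ is $I(w)\cap U$, and $\mathcal{I}(\mathrm{fl}_U(w))$ is the arrangement in $U$ of the hyperplanes $\{x\in U:(x,\alpha)=0\}$, $\alpha\in I(w)\cap U$. For a flat $X$ of an arrangement $\mathcal{A}$, the localization $\mathcal{A}_X$ consists of the hyperplanes containing $X$; for a subspace $Y$ of the center, $\mathcal{A}/Y$ is the arrangement $\{H/Y\}$ in $V/Y$. *)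

From HB Require Import structures.
From mathcomp Require Import all_boot all_order all_algebra.
Set Implicit Arguments. Unset Strict Implicit. Unset Printing Implicit Defensive.
Import Order.TTheory GRing.Theory Num.Theory.
Local Open Scope ring_scope.

(* The Euclidean space V is 'rV[F]_n (row vectors) with the standard
   inner product; a subspace of V is the row space of a square matrix. *)
Section Defs.
Variables (F : realFieldType) (n : nat).
Implicit Types (x y a b c : 'rV[F]_n) (w : 'M[F]_n) (R : seq 'rV[F]_n).

Definition dot x y : F := (x *m y^T) 0 0.

(* linear action of a matrix w on V (x |-> w x, written for row vectors) *)
Definition act w x : 'rV[F]_n := x *m w^T.

Definition refl a : 'M[F]_n := 1%:M - (2 / dot a a) *: (a^T *m a).

(* crystallographic reduced root system R (finite, given as a sequence) *)
Definition root_system R : Prop :=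
  [/\ 0 \notin R,
      {in R, forall a, - a \in R},
      {in R &, forall a b, act (refl a) b \in R},
      {in R &, forall a b, exists k : int, 2 * dot b a / dot a a = k%:~R}
    & {in R, forall a (t : F), t *: a \in R -> t = 1 \/ t = -1}].

Inductive refl_group (S : seq 'rV[F]_n) : 'M[F]_n -> Prop :=
  | refl_group1 : refl_group S 1%:M
  | refl_groupS a w : a \in S -> refl_group S w -> refl_group S (refl a *m w).

Definition roots_in R (U : 'M[F]_n) : seq 'rV[F]_n :=
  [seq a <- R | (a <= U)%MS].

(* positive roots determined by a regular vector c : R^+ = {a | (c,a) > 0};
   inversion set I(w) = {a in R^+ | w^{-1} a in R^-} *)
Definition inv_set R c w a : bool :=
  [&& a \in R, 0 < dot c a & dot c (act (invmx w) a) < 0].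

Definition hyp a : 'M[F]_n := kermx a^T.

Definition orth (U : 'M[F]_n) : 'M[F]_n := kermx U^T.

Definition Xflat R c w (U : 'M[F]_n) : 'M[F]_n :=
  (\bigcap_(a <- R | inv_set R c w a && (a <= U)%MS) hyp a)%MS.

(* the arrangement I(v) in U, for v in W_U: hyperplanes {x in U | (x,a)=0},
   a in I(v) computed in the root system R_U; as a predicate on subspaces *)
Definition inv_arr_in R c (U v H : 'M[F]_n) : Prop :=
  exists2 a, inv_set (roots_in R U) c v a & (H == U :&: hyp a)%MS.

(* the arrangement I(w)_X / U^perp, transported to U via the identification
   V/U^perp ~ U given by orthogonal projection onto U *)
Definition loc_quot_arr R c (w U H : 'M[F]_n) : Prop :=
  exists2 b, inv_set R c w b && (Xflat R c w U <= hyp b)%MS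
           & (H == hyp b *m proj_mx <<U>>%MS (orth U))%MS.

End Defs.

From HB Require Import structures.
From mathcomp Require Import all_boot all_order all_algebra.
Set Implicit Arguments. Unset Strict Implicit. Unset Printing Implicit Defensive.
Import Order.TTheory GRing.Theory Num.Theory.
Local Open Scope ring_scope.

(* Write X for the flat cut out by the hyperplanes ker a,
   a in I(w) /\ U.  By the defining property of fl_U(w), its inversion set in
   R_U is exactly I(w) /\ U, so both arrangements are indexed by roots of I(w):
   I(fl_U(w)) by those lying in U, I(w)_X / U^perp by those b with X <= ker b.
   Two facts of Euclidean linear algebra over an ordered field finish the proof.
   (1) The indexing roots agree: every a in I(w) /\ U satisfies X <= ker a
       trivially; conversely U^perp <= X (each a is in U), so X <= ker b gives
       U^perp <= b^perp, and taking orthogonal complements once more b is in U.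
   (2) The hyperplanes agree: for a in U, the image of ker a under the
       projection V = U (+) U^perp -> U is U /\ ker a. *)

Section OrthogonalComplement.
Variables (F : realFieldType) (n : nat).

Lemma dot_self_eq0 (x : 'rV[F]_n) : x *m x^T = 0 -> x = 0.
Proof.
move=> xx0; apply/rowP => i.
have : (x *m x^T) 0 0 = 0 by rewrite xx0 mxE.
rewrite mxE => /psumr_eq0P sq0.
have /sq0 : forall j : 'I_n, true -> 0 <= x 0 j * x^T j 0.
  by move=> j _; rewrite !mxE -expr2 sqr_ge0.
by move=> /(_ i isT) /eqP; rewrite !mxE mulf_eq0 orbb => /eqP.
Qed.

Lemma cap_orth_eq0 m1 m2 (A : 'M[F]_(m1, n)) (B : 'M[F]_(m2, n)) :
  (A <= B)%MS -> (A :&: kermx B^T)%MS = 0.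
Proof.
move=> sAB; apply/eqP/rowV0P => x; rewrite sub_capmx => /andP[sxA].
have /submxP[y ->] := submx_trans sxA sAB.
rewrite sub_kermx => /eqP yBB0; apply: dot_self_eq0.
by rewrite trmx_mul mulmxA yBB0 mul0mx.
Qed.

Lemma orth_antimono m1 m2 (A : 'M[F]_(m1, n)) (B : 'M[F]_(m2, n)) :
  (A <= B)%MS -> (kermx B^T <= kermx A^T)%MS.
Proof.
by case/submxP=> y ->; rewrite sub_kermx trmx_mul mulmxA mulmx_ker mul0mx.
Qed.

(* Double orthogonal complement: A^perp^perp = A, since A <= A^perp^perp and
   both have the same rank. *)
Lemma orth_orth m (A : 'M[F]_(m, n)) : (kermx (kermx A^T)^T == A)%MS.
Proof.
have sA : (A <= kermx (kermx A^T)^T)%MS.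
  have kerA0 : (kermx A^T *m A^T)^T = 0 by rewrite mulmx_ker trmx0.
  by rewrite sub_kermx; rewrite trmx_mul trmxK in kerA0; rewrite kerA0.
apply/eqmxP/eqmx_sym/eqmxP; case: (mxrank_leqif_eq sA) => _ <-.
by rewrite !mxrank_ker !mxrank_tr mxrank_ker mxrank_tr subKn ?rank_leq_col.
Qed.

Lemma orth_sum_full (U : 'M[F]_n) : row_full (<<U>> + orth U)%MS.
Proof.
rewrite /row_full mxrank_disjoint_sum; last by apply: cap_orth_eq0; rewrite genmxE.
by rewrite genmxE mxrank_ker mxrank_tr subnKC ?rank_leq_col.
Qed.

Lemma sub_of_orth (U : 'M[F]_n) (b : 'rV[F]_n) :
  (orth U <= hyp b)%MS -> (b <= U)%MS.
Proof.
move=> /orth_antimono sUb.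
by rewrite -(eqmxP (orth_orth b)) (submx_trans sUb) // (eqmxP (orth_orth U)).
Qed.

End OrthogonalComplement.

Section FlatsAndProjection.
Variables (F : realFieldType) (n : nat).
Implicit Types (U : 'M[F]_n) (a b : 'rV[F]_n) (r : seq 'rV[F]_n).

Lemma proj_hyp U a : (a <= U)%MS ->
  (U :&: hyp a == hyp a *m proj_mx <<U>>%MS (orth U))%MS.
Proof.
move=> aU; set P := proj_mx _ _.
have UUperp0 : (<<U>> :&: orth U)%MS = 0 by apply: cap_orth_eq0; rewrite genmxE.
apply/andP; split.
  rewrite -{1}(proj_mx_id UUperp0 (_ : U :&: hyp a <= <<U>>)%MS).
    exact/submxMr/capmxSr.
  by rewrite genmxE capmxSl.
rewrite sub_capmx (submx_trans (proj_mx_sub _ _ _)) ?genmxE //=.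
(* ker a - P(ker a) lies in U^perp <= ker a, hence so does P(ker a). *)
have resid : (hyp a - hyp a *m P <= hyp a)%MS.
  have sV : (hyp a <= <<U>> + orth U)%MS := submx_full _ (orth_sum_full U).
  exact: submx_trans (proj_mx_compl_sub sV) (orth_antimono aU).
by move: resid; rewrite /hyp !sub_kermx mulmxBl mulmx_ker sub0r oppr_eq0.
Qed.

Lemma flat_sub_hyp r (P : pred 'rV[F]_n) a :
  a \in r -> P a -> (\bigcap_(b <- r | P b) hyp b <= hyp a)%MS.
Proof.
elim: r => // b r IHr; rewrite inE big_cons => /orP[/eqP <- -> | ar Pa].
  exact: capmxSl.
by case: (P b); [apply: submx_trans (capmxSr _ _) (IHr ar Pa) | apply: IHr].
Qed.

Lemma orth_sub_flat U r (P : pred 'rV[F]_n) :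
  {in r, forall a, P a -> a <= U}%MS ->
  (orth U <= \bigcap_(a <- r | P a) hyp a)%MS.
Proof.
move=> rU; rewrite big_seq_cond.
elim/big_ind: _ => [|X Y sX sY|a /andP[ar Pa]]; first exact: submx1.
  by rewrite sub_capmx sX.
exact/orth_antimono/rU.
Qed.

Lemma normal_sub_of_flat U r (P : pred 'rV[F]_n) b :
  {in r, forall a, P a -> a <= U}%MS ->
  (\bigcap_(a <- r | P a) hyp a <= hyp b)%MS -> (b <= U)%MS.
Proof. by move=> rU Xb; apply/sub_of_orth/(submx_trans (orth_sub_flat rU)). Qed.

End FlatsAndProjection.

(* Theorem: I(fl_U(w)) = I(w)_X / U^perp. *)
Theorem mainTheorem12 (F : realFieldType) (n : nat)
    (R : seq 'rV[F]_n) (c : 'rV[F]_n) (U w v : 'M[F]_n) :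
  root_system R ->
  (forall a, a \in R -> dot c a != 0) ->
  refl_group R w ->
  refl_group (roots_in R U) v ->
  (forall a, inv_set (roots_in R U) c v a = inv_set R c w a && (a <= U)%MS) ->
  forall H : 'M[F]_n, inv_arr_in R c U v H <-> loc_quot_arr R c w U H.
Proof.
move=> _ _ _ _ inv_flU H; split.
- case=> a; rewrite inv_flU => /andP[Iwa aU] /eqmxP eqH.
  have aR : a \in R by case/and3P: Iwa.
  exists a; first by rewrite Iwa flat_sub_hyp ?Iwa.
  exact/eqmxP/(eqmx_trans eqH)/eqmxP/proj_hyp.
- case=> b /andP[Iwb Xb] /eqmxP eqH.
  have bU : (b <= U)%MS.
    by apply: normal_sub_of_flat Xb => a _ /andP[].
  exists b; first by rewrite inv_flU Iwb.
  exact/eqmxP/(eqmx_trans eqH)/eqmx_sym/eqmxP/proj_hyp.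
Qed.
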